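(* Assume $p_0\in(0,1)$, $p_j\in(0,1)$ and $\tau_j=\frac{p_0}{p_0+2(1-p_0)p_j}$ for $j=1,\dots,k$. Then for all $\Theta=(\theta_1,\dots,\theta_n)$ and $X=(x_1,\dots,x_n)$ in $\mathbb R^{nd}$, $$\mathbb E\|g-\nabla F(X)\|^2\le 2\mathcal L\, D_F(\Theta,X),$$ where $g=(g_1,\dots,g_n)$, the expectation is over $\xi$ and $(l_i)_{i}$, and $D_F(\Theta,X)=F(\Theta)-F(X)-\langle\nabla F(X),\Theta-X\rangle$.
   Context: Clients $1,\dots,n$ are partitioned into nonempty disjoint clusters $\mathcal I_1,\dots,\mathcal I_k$; $d\ge1$. Each $f_i(\theta)=\frac1{n_i}\sum_{l=1}^{n_i}\tilde f_{i,l}(\theta)$ where each $\tilde f_{i,l}:\mathbb R^d\to\mathbb R$ is $\tilde L$-smooth and $\mu$-strongly convex. Fix $\gamma_i>0$ and $\alpha_j\in[0,1]$, not all $\alpha_j=0$. For a vector $\Theta=(\theta_1,\dots,\theta_n)$ define $\bar\theta_j=\frac{\sum_{i\in\mathcal I_j}\gamma_i\theta_i}{\sum_{i\in\mathcal I_j}\gamma_i}$, $\bar\theta=\frac{\sum_{j}\sum_{i\in\mathcal I_j}\alpha_j\gamma_i\theta_i}{\sum_{j}\sum_{i\in\mathcal I_j}\alpha_j\gamma_i}$ (and analogously $\bar x_j,\bar x$ for $X$), and $F(\Theta)=\sum_{j}\sum_{i\in\mathcal I_j}\big(f_i(\theta_i)+\frac{(1-\alpha_j)\gamma_i}{2}\|\theta_i-\bar\theta_j\|^2+\frac{\alpha_j\gamma_i}{2}\|\theta_i-\bar\theta\|^2\big)$.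 Randomness: $\xi_0,\dots,\xi_k$ independent Bernoulli with $\mathbb P(\xi_j=1)=p_j$, and independently for each client $i$ an index $l_i$ uniform on $\{1,\dots,n_i\}$. For $i\in\mathcal I_j$: $$g_i=\nabla f_i(x_i)+\alpha_j\gamma_i(x_i-\bar x)+(1-\alpha_j)\gamma_i(x_i-\bar x_j)+\mathbf 1\{\xi_0=1\}\frac{\gamma_i\alpha_j}{p_0}\big(\theta_i-\bar\theta-(x_i-\bar x)\big)$$ $$+\mathbf 1\{\xi_0=0,\xi_j=1\}\frac{\gamma_i(1-\tau_j)(1-\alpha_j)}{(1-p_0)p_j}\big((\theta_i-\bar\theta_j)-(x_i-\bar x_j)\big)+\mathbf 1\{\xi_0=0,\xi_j=0\}\frac{1}{(1-p_0)(1-p_j)}\big(\nabla\tilde f_{i,l_i}(\theta_i)-\nabla\tilde f_{i,l_i}(x_i)\big).$$ Define $\mathcal L=\max\big\{\frac{2}{p_0}\max_{j}\max_{i\in\mathcal I_j}\alpha_j\gamma_i,\ \max_{j}\frac{2(1-\alpha_j)\max_{i\in\mathcal I_j}\gamma_i}{p_0+2(1-p_0)p_j},\ \frac{\tilde L}{1-p_0}\max_{j}\frac{1}{1-p_j}\big\}$. *)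

From HB Require Import structures.
From mathcomp Require Import all_boot all_order all_algebra.
From mathcomp Require Import all_classical all_reals all_analysis.
Set Implicit Arguments. Unset Strict Implicit. Unset Printing Implicit Defensive.
Import Order.TTheory GRing.Theory Num.Theory.
Import numFieldNormedType.Exports.
Local Open Scope ring_scope.

Section Defs.
Variable R : realType.

Definition dotv (d : nat) (u v : 'rV[R]_d) : R := \sum_(c < d) u 0 c * v 0 c.
Definition norm2v (d : nat) (u : 'rV[R]_d) : R := dotv u u.
Definition enorm (d : nat) (u : 'rV[R]_d) : R := Num.sqrt (norm2v u).

(** Euclidean (Frobenius) inner product / squared norm on R^{nd} = 'M[R]_(n,d)
    (row i of a matrix is the block theta_i). *)
Definition dotm (n d : nat) (A B : 'M[R]_(n, d)) : R :=
  \sum_(i < n) \sum_(c < d) A i c * B i c.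
Definition norm2m (n d : nat) (A : 'M[R]_(n, d)) : R := dotm A A.

Definition is_gradient_v (d : nat) (f : 'rV[R]_d -> R) (G : 'rV[R]_d -> 'rV[R]_d) :=
  forall x, differentiable f x /\ forall v, 'D_v f x = dotv (G x) v.
Definition is_gradient_m (n d : nat) (f : 'M[R]_(n, d) -> R)
  (G : 'M[R]_(n, d) -> 'M[R]_(n, d)) :=
  forall X, differentiable f X /\ forall V, 'D_V f X = dotm (G X) V.

Definition smooth (d : nat) (L : R) (f : 'rV[R]_d -> R) (G : 'rV[R]_d -> 'rV[R]_d) :=
  is_gradient_v f G /\ forall x y, enorm (G x - G y) <= L * enorm (x - y).
Definition strongly_convex (d : nat) (mu : R) (f : 'rV[R]_d -> R)
  (G : 'rV[R]_d -> 'rV[R]_d) :=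
  is_gradient_v f G /\
  forall x y, f x + dotv (G x) (y - x) + mu / 2 * norm2v (y - x) <= f y.

Variables (n d k : nat) (cl : 'I_n -> 'I_k) (gam : 'I_n -> R) (alpha : 'I_k -> R).
(* cl i = the cluster j with i \in I_j *)

Definition clusterW (j : 'I_k) : R := \sum_(i < n | cl i == j) gam i.

Definition cbar (Th : 'M[R]_(n, d)) (j : 'I_k) : 'rV[R]_d :=
  (clusterW j)^-1 *: \sum_(i < n | cl i == j) gam i *: row i Th.

Definition gbar (Th : 'M[R]_(n, d)) : 'rV[R]_d :=
  (\sum_(i < n) alpha (cl i) * gam i)^-1 *:
    \sum_(i < n) (alpha (cl i) * gam i) *: row i Th.

Definition Fobj (f : 'I_n -> 'rV[R]_d -> R) (Th : 'M[R]_(n, d)) : R :=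
  \sum_(i < n) (f i (row i Th)
     + (1 - alpha (cl i)) * gam i / 2 * norm2v (row i Th - cbar Th (cl i))
     + alpha (cl i) * gam i / 2 * norm2v (row i Th - gbar Th)).

(** The estimator g = (g_1,...,g_n), as a function of the outcome
    (xi_0, (xi_j)_j, (l_i)_i). *)
Definition gvec (nn : 'I_n -> nat)
  (gtil : forall i : 'I_n, 'I_(nn i) -> 'rV[R]_d -> 'rV[R]_d)
  (gf : 'I_n -> 'rV[R]_d -> 'rV[R]_d) (p0 : R) (p tau : 'I_k -> R)
  (Th X : 'M[R]_(n, d)) (b0 : bool) (b : {ffun 'I_k -> bool})
  (l : {dffun forall i : 'I_n, 'I_(nn i)}) : 'M[R]_(n, d) :=
  \matrix_(i < n, c < d)
    (let j := cl i in let xi := row i X in let ti := row i Th in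
     gf i xi + (alpha j * gam i) *: (xi - gbar X)
       + ((1 - alpha j) * gam i) *: (xi - cbar X j)
       + (if b0 then (gam i * alpha j / p0) *: (ti - gbar Th - (xi - gbar X))
          else 0)
       + (if ~~ b0 && b j then
            (gam i * (1 - tau j) * (1 - alpha j) / ((1 - p0) * p j)) *:
              ((ti - cbar Th j) - (xi - cbar X j))
          else 0)
       + (if ~~ b0 && ~~ b j then
            ((1 - p0) * (1 - p j))^-1 *: (gtil i (l i) ti - gtil i (l i) xi)
          else 0)) 0 c.

(** Probability of an outcome: xi_0 ~ Bernoulli(p0), xi_j ~ Bernoulli(p_j),
    l_i uniform on {0,..,n_i - 1}, all independent. *)
Definition weight (nn : 'I_n -> nat) (p0 : R) (p : 'I_k -> R) (b0 : bool)
  (b : {ffun 'I_k -> bool}) : R :=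
  (if b0 then p0 else 1 - p0) * (\prod_(j < k) (if b j then p j else 1 - p j))
  * \prod_(i < n) ((nn i)%:R)^-1.

Definition expect (nn : 'I_n -> nat) (p0 : R) (p : 'I_k -> R)
  (V : bool -> {ffun 'I_k -> bool} -> {dffun forall i : 'I_n, 'I_(nn i)} -> R) : R :=
  \sum_(b0 : bool) \sum_(b : {ffun 'I_k -> bool})
    \sum_(l : {dffun forall i : 'I_n, 'I_(nn i)}) weight nn p0 p b0 b * V b0 b l.

(** The constant \mathcal L (maxima of nonnegative quantities, computed with
    0 as neutral element). *)
Definition Lcal (p0 : R) (p : 'I_k -> R) (Ltil : R) : R :=
  Num.max
    (Num.max
      (2 / p0 * \big[Num.max/0]_(j < k) \big[Num.max/0]_(i < n | cl i == j)
                   (alpha j * gam i))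
      (\big[Num.max/0]_(j < k)
          (2 * (1 - alpha j) * (\big[Num.max/0]_(i < n | cl i == j) gam i)
           / (p0 + 2 * (1 - p0) * p j))))
    (Ltil / (1 - p0) * \big[Num.max/0]_(j < k) (1 - p j)^-1).

End Defs.

Arguments gvec [R n d k] cl gam alpha nn gtil gf p0 p tau Th X b0 b l.
Arguments expect [R n k] nn p0 p V.
Arguments weight [R n k] nn p0 p b0 b.

(* Row i of g - grad F(X) is exactly one of three corrections, selected by
   (xi_0, xi_(cl i)): a multiple of the global drift
   (theta_i - bar theta) - (x_i - bar x), of the cluster drift
   (theta_i - bar theta_j) - (x_i - bar x_j), or of
   grad f~_(i,l)(theta_i) - grad f~_(i,l)(x_i).  So E |g - grad F(X)|^2 is a sum
   over clients of three weighted squared norms.  On the other side D_F(Theta, X)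
   splits over clients into D_(f_i)(theta_i, x_i) plus (1 - alpha_j) gamma_i / 2
   and alpha_j gamma_i / 2 times the squared drifts, since weighted deviations
   from a weighted mean sum to zero.  The drift terms are compared coefficient
   by coefficient (this is where tau_j and the first two entries of L come
   from), and the gradient term by co-coercivity of the smooth convex f~_(i,l),
   averaged over l. *)

From HB Require Import structures.
From mathcomp Require Import all_boot all_order all_algebra.
From mathcomp Require Import all_classical all_reals all_analysis.
From mathcomp Require Import ring lra.
Import Order.TTheory GRing.Theory Num.Theory.
Import numFieldNormedType.Exports.
Local Open Scope classical_set_scope.
Local Open Scope ring_scope.

Set Implicit Arguments. Unset Strict Implicit.

Section EuclideanRow.
Variables (R : realType) (d : nat).
Implicit Types (u v w : 'rV[R]_d) (a : R).

Lemma dotvC u v : dotv u v = dotv v u.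
Proof. by apply: eq_bigr => c _; rewrite mulrC. Qed.

Lemma dotvDl u v w : dotv (u + v) w = dotv u w + dotv v w.
Proof. by rewrite /dotv -big_split; apply: eq_bigr => c _; rewrite !mxE mulrDl. Qed.

Lemma dotvZl a u w : dotv (a *: u) w = a * dotv u w.
Proof. by rewrite /dotv mulr_sumr; apply: eq_bigr => c _; rewrite !mxE mulrA. Qed.

Lemma dotvNl u w : dotv (- u) w = - dotv u w.
Proof. by rewrite -scaleN1r dotvZl mulN1r. Qed.

Lemma dotvBl u v w : dotv (u - v) w = dotv u w - dotv v w.
Proof. by rewrite dotvDl dotvNl. Qed.

Lemma dotvDr u v w : dotv w (u + v) = dotv w u + dotv w v.
Proof. by rewrite !(dotvC w) dotvDl. Qed.

Lemma dotvBr u v w : dotv w (u - v) = dotv w u - dotv w v.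
Proof. by rewrite !(dotvC w) dotvBl. Qed.

Lemma dotvZr a u w : dotv w (a *: u) = a * dotv w u.
Proof. by rewrite !(dotvC w) dotvZl. Qed.

Lemma dotv0l w : dotv 0 w = 0.
Proof. by rewrite -(scale0r 0) dotvZl mul0r. Qed.

Lemma dotv_suml (I : finType) (P : pred I) (F : I -> 'rV[R]_d) w :
  dotv (\sum_(i | P i) F i) w = \sum_(i | P i) dotv (F i) w.
Proof. by elim/big_rec2: _ => [|i y1 y2 _ <-]; rewrite ?dotv0l ?dotvDl. Qed.

Lemma dotv_delta u c : dotv u (delta_mx 0 c) = u 0 c.
Proof.
rewrite /dotv (bigD1 c) //= big1 => [|c' /negbTE c'c]; rewrite !mxE ?eqxx ?c'c.
  by rewrite mulr1 addr0.
by rewrite mulr0.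
Qed.

Lemma dotv_inj u v : (forall w, dotv u w = dotv v w) -> u = v.
Proof. by move=> uv; apply/rowP => c; rewrite -!dotv_delta uv. Qed.

Lemma norm2v_ge0 u : 0 <= norm2v u.
Proof. by apply: sumr_ge0 => c _; rewrite -expr2 sqr_ge0. Qed.

Lemma norm2v_eq0 u : (norm2v u == 0) = (u == 0).
Proof.
apply/idP/eqP => [|->]; last by rewrite /norm2v dotv0l.
rewrite /norm2v /dotv psumr_eq0 => [/allP u0|c _]; last by rewrite -expr2 sqr_ge0.
apply/rowP => c; have := u0 c (mem_index_enum c).
by rewrite implyTb -expr2 sqrf_eq0 mxE => /eqP.
Qed.

Lemma norm2vD u v : norm2v (u + v) = norm2v u + 2 * dotv u v + norm2v v.
Proof. by rewrite /norm2v !dotvDl !dotvDr (dotvC v u); ring. Qed.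

Lemma norm2vZ a u : norm2v (a *: u) = a ^+ 2 * norm2v u.
Proof. by rewrite /norm2v dotvZl dotvZr; ring. Qed.

Lemma norm2vN u : norm2v (- u) = norm2v u.
Proof. by rewrite -scaleN1r norm2vZ sqrrN expr1n mul1r. Qed.

Lemma norm2v_enorm u : norm2v u = enorm u ^+ 2.
Proof. by rewrite /enorm sqr_sqrtr ?norm2v_ge0. Qed.

Lemma enormZ a u : enorm (a *: u) = `|a| * enorm u.
Proof. by rewrite /enorm norm2vZ sqrtrM ?sqr_ge0 // sqrtr_sqr. Qed.

(* Young's inequality: expand [0 <= |u - s v|^2] and divide by [s]. *)
Lemma dotv_young (s : R) u v :
  0 < s -> 2 * dotv u v <= norm2v u / s + s * norm2v v.
Proof.
move=> s0; have := norm2v_ge0 (u - s *: v).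
rewrite norm2vD norm2vN dotvC dotvNl dotvZl norm2vZ => uv.
have -> : norm2v u / s + s * norm2v v
    = (norm2v u + 2 * - (s * dotv v u) + s ^+ 2 * norm2v v) / s + 2 * dotv u v.
  by rewrite dotvC; field; rewrite gt_eqF.
by rewrite lerDr divr_ge0 // ltW.
Qed.

Lemma lipschitz_dotv_le (L : R) u v :
  0 <= L -> enorm u <= L * enorm v -> dotv u v <= L * norm2v v.
Proof.
move=> L0 uv; have u2 : norm2v u <= L ^+ 2 * norm2v v.
  rewrite !norm2v_enorm -exprMn ler_sqr ?nnegrE ?sqrtr_ge0 //.
  by rewrite mulr_ge0 ?sqrtr_ge0.
have [L_0|Lneq0] := eqVneq L 0.
  move: u2; rewrite L_0 expr0n /= mul0r => u2.
  have /eqP -> : u == 0 by rewrite -norm2v_eq0 eq_le u2 norm2v_ge0.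
  by rewrite dotv0l.
have Lgt0 : 0 < L by rewrite lt_def Lneq0.
have := dotv_young u v Lgt0.
have : norm2v u / L <= L * norm2v v.
  by rewrite ler_pdivrMr // (le_trans u2) // [_ * L]mulrC mulrA -expr2.
lra.
Qed.

Lemma lipschitz_ge0 (L : R) (G : 'rV[R]_d -> 'rV[R]_d) :
  (0 < d)%N -> (forall x y, enorm (G x - G y) <= L * enorm (x - y)) -> 0 <= L.
Proof.
move=> d0 lipG; have := le_trans (sqrtr_ge0 _) (lipG (const_mx 1) 0).
rewrite pmulr_lge0 // sqrtr_gt0 subr0 /norm2v /dotv.
under eq_bigr do rewrite mxE mulr1.
by rewrite sumr_const card_ord ltr0n.
Qed.

End EuclideanRow.

Section Derivatives.
Variable R : realType.

Lemma derive_affine_quotient (V : normedModType R) (f : V -> R) x v (u w : R) :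
  (forall h : R, h != 0 -> h^-1 *: ((f \o shift x) (h *: v) - f x) = u + h * w) ->
  derivable f x v /\ 'D_v f x = u.
Proof.
move=> fq.
have : (fun h : R => h^-1 *: ((f \o shift x) (h *: v) - f x)) @ 0^' --> u.
  have E : \forall h \near 0^', u + h * w = h^-1 *: ((f \o shift x) (h *: v) - f x).
    by near=> h; rewrite fq //; near: h; exact: nbhs_dnbhs_neq.
  apply: cvg_trans (near_eq_cvg E) _; apply: cvg_within_filter.
  have : (fun h : R => u + h * w) @ 0 --> u + 0 * w.
    by apply: cvgD; [exact: cvg_cst | apply: cvgMr_tmp; exact: cvg_id].
  by rewrite mul0r addr0.
by move=> uq; split; [apply/cvg_ex; exists u | exact: cvg_lim].
Unshelve. all: by end_near.
Qed.

Lemma derive_reparam (V1 V2 : normedModType R) (F : V1 -> R) (G : V2 -> R) x v y w :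
  (forall h : R, F (h *: v + x) = G (h *: w + y)) -> F x = G y ->
  (derivable F x v <-> derivable G y w) /\ 'D_v F x = 'D_w G y.
Proof.
move=> FG FGxy.
rewrite /derivable /derive.
suff -> : (fun h : R => h^-1 *: ((F \o shift x) (h *: v) - F x)) =
          (fun h : R => h^-1 *: ((G \o shift y) (h *: w) - G y)) by [].
by apply: funext => h /=; rewrite FG FGxy.
Qed.

Lemma derive_line d (f : 'rV[R]_d -> R) G y v t :
  is_gradient_v f G ->
  derivable (fun s : R => f (y + s *: v)) t 1 /\
  'D_1 (fun s : R => f (y + s *: v)) t = dotv (G (y + t *: v)) v.
Proof.
move=> /(_ (y + t *: v)) [fdiff <-].
have [fdv ->] := @derive_reparam _ _ (fun s : R => f (y + s *: v)) f t 1
  (y + t *: v) v (fun h => ltac:(by rewrite [h *: 1]mulr1 scalerDl addrCA addrA)) erefl.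
by split => //; apply/fdv; exact: diff_derivable.
Qed.

(* [s |-> f (y + s v) - s <G y, v> - s^2 L/2 |v|^2] is nonincreasing on [0, 1]. *)
Lemma smooth_descent d (L : R) (f : 'rV[R]_d -> R) G : 0 <= L -> smooth L f G ->
  forall y v, f (y + v) <= f y + dotv (G y) v + L / 2 * norm2v v.
Proof.
move=> L0 [fG lipG] y v.
pose a := dotv (G y) v; pose b := L / 2 * norm2v v.
pose psi s := f (y + s *: v) - (s * a + s ^+ 2 * b).
have Dquad t : derivable (fun s : R => s * a + s ^+ 2 * b) t 1 /\
               'D_1 (fun s : R => s * a + s ^+ 2 * b) t = a + 2 * t * b.
  apply: (derive_affine_quotient _ (w := b)) => h h0 /=.
  by rewrite [h *: 1]mulr1 -[h^-1 *: _]/(h^-1 * _); field.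
have Dpsi t : derivable psi t 1.
  exact: derivableB (derive_line y v t fG).1 (Dquad t).1.
have dpsi_le0 t : t \in `]0, 1[ -> derive1 psi t <= 0.
  rewrite in_itv /= => /andP[t0 _].
  rewrite derive1E deriveB; [|exact: (derive_line y v t fG).1|exact: (Dquad t).1].
  rewrite (derive_line y v t fG).2 (Dquad t).2 subr_le0 /a /b.
  rewrite -[dotv (G _) v](subrK (dotv (G y) v)) -dotvBl addrC lerD2l.
  have -> : 2 * t * (L / 2 * norm2v v) = L * t * norm2v v by field.
  apply: lipschitz_dotv_le; first by rewrite mulr_ge0 // ltW.
  have := lipG (y + t *: v) y.
  by rewrite addrAC subrr add0r enormZ ger0_norm ?(ltW t0) // mulrA.
have := @ler0_derive1_le_cc R psi 0 1 (fun t _ => Dpsi t) dpsi_le0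
  (derivable_within_continuous (fun t _ => Dpsi t)) 1 0.
rewrite !in_itv /= ler01 lexx /= => /(_ (lexx _) isT isT).
rewrite /psi scale0r addr0 scale1r !mul0r expr0n /= mul0r addr0 subr0.
by rewrite mul1r expr1n mul1r /a /b; lra.
Qed.

(* Co-coercivity: compare [f] at [y - L^-1 (G y - G x)] via convexity at [x]
   and the descent lemma at [y]. *)
Lemma smooth_convex_cocoercive d (L : R) (f : 'rV[R]_d -> R) G :
  0 <= L -> smooth L f G ->
  (forall x y, f x + dotv (G x) (y - x) <= f y) ->
  forall x y, norm2v (G y - G x) <= 2 * L * (f y - f x - dotv (G x) (y - x)).
Proof.
move=> L0 fs fcvx x y; set w := G y - G x.
have [L_0|Lneq0] := eqVneq L 0.
  have w0 : enorm w <= 0 by rewrite -(mul0r (enorm (y - x))) -L_0 fs.2.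
  have -> : norm2v w = 0.
    by rewrite norm2v_enorm; apply/eqP; rewrite sqrf_eq0 eq_le w0 sqrtr_ge0.
  by rewrite L_0 mulr0 mul0r.
have Lgt0 : 0 < L by rewrite lt_def Lneq0.
have Dz := smooth_descent L0 fs y (- (L^-1 *: w)).
have Cz := fcvx x (y + - (L^-1 *: w)).
rewrite addrAC dotvBr dotvZr in Cz.
rewrite dotvC dotvNl dotvZl norm2vN norm2vZ dotvC in Dz.
have wG : dotv (G y) w - dotv (G x) w = norm2v w by rewrite -dotvBl.
have key : L^-1 * norm2v w - L / 2 * (L^-1 ^+ 2 * norm2v w)
           <= f y - f x - dotv (G x) (y - x).
  have : L^-1 * dotv (G y) w - L^-1 * dotv (G x) w = L^-1 * norm2v w.
    by rewrite -mulrBr wG.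
  lra.
have <- : 2 * L * (L^-1 * norm2v w - L / 2 * (L^-1 ^+ 2 * norm2v w)) = norm2v w.
  by field.
by rewrite ler_pM2l // mulr_gt0.
Qed.

Lemma strongly_convex_convex d (mu : R) (f : 'rV[R]_d -> R) G :
  0 <= mu -> strongly_convex mu f G ->
  forall x y, f x + dotv (G x) (y - x) <= f y.
Proof.
move=> mu0 [_ fsc] x y; apply: le_trans (fsc x y); rewrite lerDl.
by rewrite mulr_ge0 ?divr_ge0 ?norm2v_ge0.
Qed.

End Derivatives.

Section EuclideanMatrix.
Variables (R : realType) (m d : nat).
Implicit Types A B : 'M[R]_(m, d).

Lemma dotmE A B : dotm A B = \sum_i dotv (row i A) (row i B).
Proof. by apply: eq_bigr => i _; apply: eq_bigr => c _; rewrite !mxE. Qed.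

Lemma dotm_delta A i c : dotm A (delta_mx i c) = A i c.
Proof.
rewrite dotmE (bigD1 i) //= big1 => [|i' i'i].
  have -> : row i (delta_mx i c : 'M[R]_(m, d)) = delta_mx 0 c.
    by apply/rowP => c'; rewrite !mxE eqxx.
  by rewrite addr0 dotv_delta mxE.
have -> : row i' (delta_mx i c : 'M[R]_(m, d)) = 0.
  by apply/rowP => c'; rewrite !mxE (negbTE i'i).
by rewrite dotvC dotv0l.
Qed.

Lemma dotm_inj A B : (forall V, dotm A V = dotm B V) -> A = B.
Proof. by move=> AB; apply/matrixP => i c; rewrite -!dotm_delta AB. Qed.

End EuclideanMatrix.

Section Gradients.
Variable R : realType.

Lemma gradient_scale_sum d m (F : 'I_m -> 'rV[R]_d -> R) (Gs : 'I_m -> 'rV[R]_d -> 'rV[R]_d)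
    (f : 'rV[R]_d -> R) G (c : R) :
  (forall l, is_gradient_v (F l) (Gs l)) -> (forall x, f x = c * \sum_l F l x) ->
  is_gradient_v f G -> forall x, G x = c *: \sum_l Gs l x.
Proof.
move=> FG fE fG x; apply: dotv_inj => v; rewrite -(fG x).2.
have -> : f = c \*: \sum_l F l by apply: funext => y; rewrite fE fct_sumE.
have Fder l : derivable (F l) x v by apply: diff_derivable; exact: (FG l x).1.
rewrite deriveZ ?derive_sum //; last exact: derivable_sum.
by rewrite dotvZl dotv_suml; congr (_ * _); apply: eq_bigr => l _; rewrite (FG l x).2.
Qed.

Lemma derive_row_comp m d (f : 'rV[R]_d -> R) G i (X V : 'M[R]_(m, d)) :
  is_gradient_v f G ->
  derivable (fun Th : 'M[R]_(m, d) => f (row i Th)) X V /\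
  'D_V (fun Th : 'M[R]_(m, d) => f (row i Th)) X = dotv (G (row i X)) (row i V).
Proof.
move=> /(_ (row i X)) [fdiff <-].
have [fdv ->] := @derive_reparam R _ _ (fun Th : 'M[R]_(m, d) => f (row i Th)) f
  X V (row i X) (row i V) (fun h => ltac:(by rewrite /= linearD linearZ)) erefl.
by split => //; apply/fdv; exact: diff_derivable.
Qed.

Lemma derive_norm2v_affine m d (T : 'M[R]_(m, d) -> 'rV[R]_d) (c : R) X V :
  (forall h : R, T (h *: V + X) = h *: T V + T X) ->
  derivable (fun Th => c * norm2v (T Th)) X V /\
  'D_V (fun Th => c * norm2v (T Th)) X = c * (2 * dotv (T X) (T V)).
Proof.
move=> Taff; apply: (derive_affine_quotient _ (w := c * norm2v (T V))) => h h0 /=.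
rewrite Taff norm2vD norm2vZ dotvZl dotvC -[h^-1 *: _]/(h^-1 * _).
by field.
Qed.

End Gradients.

Lemma penalty_bregman (R : realType) d (c : R) (u a m : 'rV[R]_d) :
  c / 2 * norm2v u - c / 2 * norm2v a - c * dotv a (u - a + m)
  = c / 2 * norm2v (u - a) - c * dotv a m.
Proof.
set w := u - a; have -> : u = a + w by rewrite addrC subrK.
by rewrite norm2vD dotvDr; field.
Qed.

Section Clusters.
Variables (R : realType) (n d k : nat) (cl : 'I_n -> 'I_k).
Variables (gam : 'I_n -> R) (alpha : 'I_k -> R).
Hypothesis clusterW_neq0 : forall j, clusterW cl gam j != 0.
Hypothesis alpha_weight_neq0 : \sum_(i < n) alpha (cl i) * gam i != 0.

Local Notation cb := (cbar cl gam).
Local Notation gb := (gbar cl gam alpha).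

Lemma cbar_affine (h : R) (A B : 'M[R]_(n, d)) j : cb (h *: A + B) j = h *: cb A j + cb B j.
Proof.
rewrite scalerA [h * _]mulrC -scalerA -scalerDr; congr (_ *: _).
rewrite [in RHS]scaler_sumr -big_split; apply: eq_bigr => i _ /=.
by rewrite linearD linearZ scalerDr !scalerA mulrC.
Qed.

Lemma gbar_affine (h : R) (A B : 'M[R]_(n, d)) : gb (h *: A + B) = h *: gb A + gb B.
Proof.
rewrite scalerA [h * _]mulrC -scalerA -scalerDr; congr (_ *: _).
rewrite [in RHS]scaler_sumr -big_split; apply: eq_bigr => i _ /=.
by rewrite linearD linearZ scalerDr !scalerA mulrC.
Qed.

(* The deviations from a weighted mean have weighted sum zero. *)
Lemma cluster_dev_dotv_sum (X : 'M[R]_(n, d)) (w : 'I_k -> 'rV[R]_d) :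
  \sum_(i < n) ((1 - alpha (cl i)) * gam i) * dotv (row i X - cb X (cl i)) (w (cl i)) = 0.
Proof.
rewrite (partition_big cl xpredT) //=; apply: big1 => j _.
rewrite (eq_bigr (fun i => (1 - alpha j) * dotv (gam i *: (row i X - cb X j)) (w j)));
  last first.
  by move=> i /eqP <-; rewrite dotvZl mulrA.
rewrite -mulr_sumr -dotv_suml (eq_bigr (fun i => gam i *: row i X - gam i *: cb X j)).
  rewrite sumrB -scaler_suml /cbar scalerA -/(clusterW cl gam j) mulfV //.
  by rewrite scale1r subrr dotv0l mulr0.
by move=> i _; rewrite scalerBr.
Qed.

Lemma global_dev_dotv_sum (X : 'M[R]_(n, d)) (w : 'rV[R]_d) :
  \sum_(i < n) (alpha (cl i) * gam i) * dotv (row i X - gb X) w = 0.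
Proof.
under eq_bigr do rewrite -dotvZl scalerBr.
by rewrite -dotv_suml sumrB -scaler_suml /gbar scalerA mulfV // scale1r subrr dotv0l.
Qed.

Definition gradF (gf : 'I_n -> 'rV[R]_d -> 'rV[R]_d) (X : 'M[R]_(n, d)) : 'M[R]_(n, d) :=
  \matrix_i (gf i (row i X) + (alpha (cl i) * gam i) *: (row i X - gb X)
             + ((1 - alpha (cl i)) * gam i) *: (row i X - cb X (cl i))).

Lemma gradF_eq (f : 'I_n -> 'rV[R]_d -> R) gf GF X :
  is_gradient_m (Fobj cl gam alpha f) GF -> (forall i, is_gradient_v (f i) (gf i)) ->
  GF X = gradF gf X.
Proof.
move=> FGF fgf; apply: dotm_inj => V; rewrite -(FGF X).2.
pose T1 i (Th : 'M[R]_(n, d)) := f i (row i Th).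
pose T2 i (Th : 'M[R]_(n, d)) :=
  (1 - alpha (cl i)) * gam i / 2 * norm2v (row i Th - cb Th (cl i)).
pose T3 i (Th : 'M[R]_(n, d)) := alpha (cl i) * gam i / 2 * norm2v (row i Th - gb Th).
have -> : Fobj cl gam alpha f = \sum_i (T1 i + T2 i + T3 i).
  by apply: funext => Th; rewrite fct_sumE.
have D1 i := derive_row_comp i X V (fgf i).
have D2 i := @derive_norm2v_affine R n d (fun Th => row i Th - cb Th (cl i))
  ((1 - alpha (cl i)) * gam i / 2) X V
  (fun h => ltac:(by rewrite /= linearD linearZ cbar_affine scalerBr opprD addrACA)).
have D3 i := @derive_norm2v_affine R n d (fun Th => row i Th - gb Th)
  (alpha (cl i) * gam i / 2) X V
  (fun h => ltac:(by rewrite /= linearD linearZ gbar_affine scalerBr opprD addrACA)).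
have D12 i := derivableD (D1 i).1 (D2 i).1.
rewrite derive_sum => [|i]; last exact: derivableD (D12 i) (D3 i).1.
have DT i : 'D_V (T1 i + T2 i + T3 i) X = 'D_V (T1 i) X + 'D_V (T2 i) X + 'D_V (T3 i) X.
  by rewrite deriveD ?deriveD //;
    [exact: (D1 i).1 | exact: (D2 i).1 | exact: D12 i | exact: (D3 i).1].
under eq_bigr do rewrite DT (D1 _).2 (D2 _).2 (D3 _).2.
transitivity (\sum_i dotv (row i (gradF gf X)) (row i V)
  - \sum_i ((1 - alpha (cl i)) * gam i) * dotv (row i X - cb X (cl i)) (cb V (cl i))
  - \sum_i (alpha (cl i) * gam i) * dotv (row i X - gb X) (gb V)); last first.
  by rewrite cluster_dev_dotv_sum global_dev_dotv_sum !subr0 dotmE.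
rewrite -!sumrB; apply: eq_bigr => i _.
rewrite rowK !(dotvDl, dotvZl, dotvBr, dotvNl).
by field; rewrite alpha_weight_neq0 clusterW_neq0.
Qed.

Lemma bregman_Fobj (f : 'I_n -> 'rV[R]_d -> R) gf (Th X : 'M[R]_(n, d)) :
  Fobj cl gam alpha f Th - Fobj cl gam alpha f X - dotm (gradF gf X) (Th - X) =
  \sum_(i < n) ((f i (row i Th) - f i (row i X) - dotv (gf i (row i X)) (row i Th - row i X))
   + (1 - alpha (cl i)) * gam i / 2 *
       norm2v ((row i Th - cb Th (cl i)) - (row i X - cb X (cl i)))
   + alpha (cl i) * gam i / 2 * norm2v ((row i Th - gb Th) - (row i X - gb X))).
Proof.
transitivity (\sum_(i < n)
     ((f i (row i Th) - f i (row i X) - dotv (gf i (row i X)) (row i Th - row i X))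
   + (1 - alpha (cl i)) * gam i / 2 *
       norm2v ((row i Th - cb Th (cl i)) - (row i X - cb X (cl i)))
   + alpha (cl i) * gam i / 2 * norm2v ((row i Th - gb Th) - (row i X - gb X)))
  - \sum_i ((1 - alpha (cl i)) * gam i) *
      dotv (row i X - cb X (cl i)) (cb Th (cl i) - cb X (cl i))
  - \sum_i (alpha (cl i) * gam i) * dotv (row i X - gb X) (gb Th - gb X)); last first.
  by rewrite (cluster_dev_dotv_sum X (fun j => cb Th j - cb X j)) global_dev_dotv_sum
    // !subr0.
rewrite /Fobj dotmE -!sumrB; apply: eq_bigr => i _.
rewrite rowK [row i (Th - X)]linearB /= dotvDl dotvDl dotvZl dotvZl.
set c1 := (1 - alpha (cl i)) * gam i; set c2 := alpha (cl i) * gam i.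
have shift_diff (u v w w' : 'rV[R]_d) : u - w - (v - w') + (w - w') = u - v.
  by apply/rowP => c; rewrite !mxE; ring.
have h1 := penalty_bregman c1 (row i Th - cb Th (cl i)) (row i X - cb X (cl i))
  (cb Th (cl i) - cb X (cl i)).
have h2 := penalty_bregman c2 (row i Th - gb Th) (row i X - gb X) (gb Th - gb X).
rewrite !shift_diff in h1 h2.
lra.
Qed.

End Clusters.

Section Expectation.
Variable R : realType.

Definition mean m (h : 'I_m -> R) : R := (m%:R)^-1 * \sum_(x < m) h x.

Lemma mean_cst m (c : R) : (0 < m)%N -> mean (fun _ : 'I_m => c) = c.
Proof.
move=> m0; rewrite /mean sumr_const card_ord -(mulr_natl c) mulrA mulVf ?mul1r //.
by rewrite pnatr_eq0 -lt0n.
Qed.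

Lemma card_dffun_fiber n (nn : 'I_n -> nat) (i0 : 'I_n) (x : 'I_(nn i0)) :
  #|[pred l : {dffun forall i : 'I_n, 'I_(nn i)} | l i0 == x]| =
  (\prod_(i < n | i != i0) nn i)%N.
Proof.
pose F i := [pred y : 'I_(nn i) | (i == i0) ==> (val y == val x)].
have fiberE : [pred l : {dffun forall i : 'I_n, 'I_(nn i)} | l i0 == x] =i family F.
  move=> l; rewrite !inE; apply/eqP/familyP => [li0 i|lF].
    by rewrite inE -li0; apply/implyP => /eqP ->.
  by apply: val_inj; have := lF i0; rewrite inE eqxx => /eqP.
rewrite (eq_card fiberE) card_family foldrE big_map big_enum /= (bigD1 i0) //=.
have -> : #|F i0| = 1%N.
  rewrite -(card1 x); apply: eq_card => y; rewrite !inE eqxx /=.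
  by apply/eqP/eqP => [/val_inj|->].
rewrite mul1n; apply: eq_bigr => i ii0.
by rewrite -[RHS]card_ord; apply: eq_card => y; rewrite !inE (negbTE ii0).
Qed.

Lemma sum_dffun_marginal n (nn : 'I_n -> nat) (i0 : 'I_n) (h : 'I_(nn i0) -> R) :
  (forall i, (0 < nn i)%N) ->
  \sum_(l : {dffun forall i : 'I_n, 'I_(nn i)}) (\prod_(i < n) ((nn i)%:R)^-1) * h (l i0)
  = mean h.
Proof.
move=> nn0; rewrite -mulr_sumr.
rewrite (partition_big (fun l : {dffun forall i : 'I_n, 'I_(nn i)} => l i0) xpredT) //=.
rewrite (eq_bigr (fun x => h x *+ (\prod_(i < n | i != i0) nn i)%N)); last first.
  move=> x _; rewrite (eq_bigr (fun _ => h x)) => [|l /eqP -> //].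
  by rewrite sumr_const card_dffun_fiber.
rewrite sumrMnl -mulr_natr mulrCA /mean mulrC; congr (_ * _).
rewrite natr_prod (bigD1 i0) //= -mulrA -big_split /= big1 ?mulr1 // => i _.
by rewrite mulVf // pnatr_eq0 -lt0n nn0.
Qed.

Lemma sum_bernoulli_marginal k (p : 'I_k -> R) (j0 : 'I_k) (h : bool -> R) :
  \sum_(b : {ffun 'I_k -> bool}) (\prod_(j < k) (if b j then p j else 1 - p j)) * h (b j0)
  = p j0 * h true + (1 - p j0) * h false.
Proof.
pose F j (be : bool) := (if be then p j else 1 - p j) * (if j == j0 then h be else 1).
transitivity (\sum_(b : {ffun 'I_k -> bool}) \prod_(j < k) F j (b j)).
  apply: eq_bigr => b _; rewrite big_split /=; congr (_ * _).
  by rewrite (bigD1 j0) //= eqxx big1 ?mulr1 // => j /negbTE ->.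
rewrite -bigA_distr_bigA (bigD1 j0) //= [X in _ * X]big1 => [|j /negbTE jj0].
  by rewrite mulr1 big_bool /F eqxx.
by rewrite big_bool /F jj0 /= !mulr1 addrC subrK.
Qed.

Lemma expect_sum_clients n k (cl : 'I_n -> 'I_k) (nn : 'I_n -> nat) (p0 : R) (p : 'I_k -> R)
    (h : forall i : 'I_n, bool -> bool -> 'I_(nn i) -> R) :
  (forall i, (0 < nn i)%N) ->
  expect nn p0 p (fun b0 b l => \sum_(i < n) h i b0 (b (cl i)) (l i)) =
  \sum_(i < n) (p0 * (p (cl i) * mean (h i true true) + (1 - p (cl i)) * mean (h i true false))
     + (1 - p0) * (p (cl i) * mean (h i false true)
                   + (1 - p (cl i)) * mean (h i false false))).
Proof.
move=> nn0; rewrite /expect.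
have marg_l b0 b : \sum_(l : {dffun forall i : 'I_n, 'I_(nn i)})
      weight nn p0 p b0 b * \sum_(i < n) h i b0 (b (cl i)) (l i)
    = \sum_(i < n) (if b0 then p0 else 1 - p0) *
        (\prod_(j < k) (if b j then p j else 1 - p j)) * mean (h i b0 (b (cl i))).
  under eq_bigr do rewrite mulr_sumr.
  rewrite exchange_big /=; apply: eq_bigr => i _.
  rewrite -(sum_dffun_marginal _ nn0) mulr_sumr.
  by apply: eq_bigr => l _; rewrite /weight !mulrA.
under eq_bigr do under eq_bigr do rewrite marg_l.
under eq_bigr do rewrite exchange_big.
rewrite exchange_big /=; apply: eq_bigr => i _.
have marg_b (c : R) (g : bool -> R) :
    \sum_(b : {ffun 'I_k -> bool})
      c * (\prod_(j < k) (if b j then p j else 1 - p j)) * g (b (cl i))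
    = c * (p (cl i) * g true + (1 - p (cl i)) * g false).
  by rewrite -sum_bernoulli_marginal mulr_sumr; apply: eq_bigr => b _; rewrite mulrA.
by rewrite big_bool /= (marg_b p0 (fun be => mean (h i true be)))
  (marg_b (1 - p0) (fun be => mean (h i false be))).
Qed.

End Expectation.

Section ScalarBounds.
Variable R : realType.
Implicit Types P q g al Lc : R.

Lemma global_term_le P al g A2 Lc : 0 < P -> 0 <= al -> 0 <= g -> 0 <= A2 ->
  2 / P * (al * g) <= Lc -> P * ((g * al / P) ^+ 2 * A2) <= 2 * Lc * (al * g / 2 * A2).
Proof.
move=> P0 al0 g0 A0 Lc1; have u0 : 0 <= al * g by rewrite mulr_ge0.
have Lc0 : 0 <= Lc := le_trans (mulr_ge0 (divr_ge0 (ler0n _ 2) (ltW P0)) u0) Lc1.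
have -> : P * ((g * al / P) ^+ 2 * A2) = (2 / P * (al * g)) * (al * g / 2 * A2).
  by field; rewrite gt_eqF.
have uA0 : 0 <= al * g / 2 * A2 by rewrite !mulr_ge0.
apply: (le_trans (ler_wpM2r uA0 Lc1)).
have : 0 <= Lc * (al * g / 2 * A2) by rewrite mulr_ge0.
lra.
Qed.

Lemma cluster_term_le P q al g B2 Lc : 0 < P <= 1 -> 0 <= q -> al <= 1 -> 0 <= g -> 0 <= B2 ->
  2 * (1 - al) * g / (P + 2 * (1 - P) * q) <= Lc ->
  (1 - P) * (q * ((2 * (1 - al) * g / (P + 2 * (1 - P) * q)) ^+ 2 * B2))
  <= 2 * Lc * ((1 - al) * g / 2 * B2).
Proof.
move=> /andP[P0 P1] q0 al1 g0 B0 wLc.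
set s := P + 2 * (1 - P) * q; set w := 2 * (1 - al) * g / s.
have s0 : 0 < s by apply: (lt_le_trans P0); rewrite lerDl !mulr_ge0 ?subr_ge0.
have w0 : 0 <= w by rewrite divr_ge0 ?mulr_ge0 ?subr_ge0 ?(ltW s0).
have -> : 2 * Lc * ((1 - al) * g / 2 * B2) = Lc * (w * B2) * (s / 2).
  by rewrite /w; field; rewrite gt_eqF.
have -> : (1 - P) * (q * (w ^+ 2 * B2)) = w * (w * B2) * ((1 - P) * q) by ring.
apply: ler_pM.
- by rewrite mulr_ge0 // mulr_ge0.
- by rewrite mulr_ge0 // subr_ge0.
- by rewrite ler_wpM2r // mulr_ge0.
- by rewrite ler_pdivlMr // /s; lra.
Qed.

Lemma local_term_le P q Sc Df Lt Lc : P < 1 -> q < 1 -> 0 <= Df ->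
  Sc <= 2 * Lt * Df -> Lt / (1 - P) * (1 - q)^-1 <= Lc ->
  (1 - P) * ((1 - q) * (((1 - P) * (1 - q))^-1 ^+ 2 * Sc)) <= 2 * Lc * Df.
Proof.
move=> P1 q1 D0 ScD LtLc; have Pq0 : 0 < (1 - P) * (1 - q) by rewrite mulr_gt0 ?subr_gt0.
have [P1n q1n] : 1 - P != 0 /\ 1 - q != 0 by rewrite !gt_eqF ?subr_gt0.
have -> : (1 - P) * ((1 - q) * (((1 - P) * (1 - q))^-1 ^+ 2 * Sc)) = Sc / ((1 - P) * (1 - q)).
  by field; rewrite P1n q1n.
rewrite ler_pdivrMr //; apply: (le_trans ScD).
have -> : 2 * Lt * Df = 2 * (Lt / (1 - P) * (1 - q)^-1) * Df * ((1 - P) * (1 - q)).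
  by field; rewrite P1n q1n.
by rewrite ler_wpM2r ?(ltW Pq0) // ler_wpM2r // ler_wpM2l.
Qed.

(* With [tau = P / s], [s = P + 2 (1 - P) q], the cluster-step coefficient
   collapses to [2 (1 - al) g / s], the quantity bounded by the second entry of
   the constant. *)
Lemma client_term_le P q g al tau A2 B2 Df Sc Lt Lc :
  0 < P < 1 -> 0 < q < 1 -> 0 < g -> 0 <= al <= 1 -> tau = P / (P + 2 * (1 - P) * q) ->
  0 <= A2 -> 0 <= B2 -> 0 <= Df -> Sc <= 2 * Lt * Df ->
  2 / P * (al * g) <= Lc ->
  2 * (1 - al) * g / (P + 2 * (1 - P) * q) <= Lc ->
  Lt / (1 - P) * (1 - q)^-1 <= Lc ->
  P * ((g * al / P) ^+ 2 * A2)
  + (1 - P) * (q * ((g * (1 - tau) * (1 - al) / ((1 - P) * q)) ^+ 2 * B2)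
               + (1 - q) * (((1 - P) * (1 - q))^-1 ^+ 2 * Sc))
  <= 2 * Lc * (Df + (1 - al) * g / 2 * B2 + al * g / 2 * A2).
Proof.
move=> /andP[P0 P1] /andP[q0 q1] g0 /andP[al0 al1] tauE A0 B0 D0 ScD Lc1 Lc2 Lc3.
have -> : g * (1 - tau) * (1 - al) / ((1 - P) * q)
          = 2 * (1 - al) * g / (P + 2 * (1 - P) * q).
  rewrite tauE; field; rewrite !gt_eqF ?subr_gt0 //.
  by rewrite addr_gt0 // !mulr_gt0 ?subr_gt0.
have := global_term_le P0 al0 (ltW g0) A0 Lc1.
have P01 : 0 < P <= 1 by rewrite P0 ltW.
have := cluster_term_le P01 (ltW q0) al1 (ltW g0) B0 Lc2.
have := local_term_le P1 q1 D0 ScD Lc3.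
lra.
Qed.

End ScalarBounds.

Section AveragedSmooth.
Variables (R : realType) (d m : nat) (L : R).
Variables (ft : 'I_m -> 'rV[R]_d -> R) (gt : 'I_m -> 'rV[R]_d -> 'rV[R]_d).
Variables (f : 'rV[R]_d -> R) (g : 'rV[R]_d -> 'rV[R]_d).
Hypothesis ft_smooth : forall l, smooth L (ft l) (gt l).
Hypothesis ft_convex : forall l x y, ft l x + dotv (gt l x) (y - x) <= ft l y.
Hypothesis fE : forall x, f x = mean (fun l => ft l x).
Hypothesis f_grad : is_gradient_v f g.

Lemma bregman_mean x y :
  f y - f x - dotv (g x) (y - x) = mean (fun l => ft l y - ft l x - dotv (gt l x) (y - x)).
Proof.
rewrite !fE (gradient_scale_sum (fun l => (ft_smooth l).1) fE f_grad).
by rewrite dotvZl dotv_suml /mean -!mulrBr -!sumrB.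
Qed.

Lemma bregman_mean_ge0 x y : 0 <= f y - f x - dotv (g x) (y - x).
Proof.
rewrite bregman_mean mulr_ge0 ?invr_ge0 ?ler0n // sumr_ge0 // => l _.
by rewrite subr_ge0 lerBrDr addrC ft_convex.
Qed.

Lemma mean_cocoercive x y : 0 <= L ->
  mean (fun l => norm2v (gt l y - gt l x)) <= 2 * L * (f y - f x - dotv (g x) (y - x)).
Proof.
move=> L0; rewrite bregman_mean /mean mulrCA ler_wpM2l ?invr_ge0 ?ler0n // mulr_sumr.
by apply: ler_sum => l _; apply: smooth_convex_cocoercive.
Qed.

End AveragedSmooth.

Section Constant.
Variables (R : realType) (n k : nat) (cl : 'I_n -> 'I_k).
Variables (gam : 'I_n -> R) (alpha : 'I_k -> R) (p0 Ltil : R) (p : 'I_k -> R).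
Hypothesis p0_01 : 0 < p0 < 1.
Hypothesis p_01 : forall j, 0 < p j < 1.
Hypothesis alpha_01 : forall j, 0 <= alpha j <= 1.
Hypothesis Ltil_ge0 : 0 <= Ltil.

Local Notation Lc := (Lcal cl gam alpha p0 p Ltil).

Lemma Lcal_ge_global i : 2 / p0 * (alpha (cl i) * gam i) <= Lc.
Proof.
have [p0_gt0 _] := andP p0_01.
rewrite /Lcal !le_max; apply/orP; left; apply/orP; left.
apply: ler_wpM2l; first by rewrite divr_ge0 // ltW.
by apply: le_trans (le_bigmax _ _ (cl i)); exact: le_bigmax_cond.
Qed.

Lemma Lcal_ge_cluster i :
  2 * (1 - alpha (cl i)) * gam i / (p0 + 2 * (1 - p0) * p (cl i)) <= Lc.
Proof.
have [p0_gt0 p0_lt1] := andP p0_01; have [pi_gt0 _] := andP (p_01 (cl i)).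
have s0 : 0 < p0 + 2 * (1 - p0) * p (cl i) by rewrite addr_gt0 // !mulr_gt0 ?subr_gt0.
rewrite /Lcal !le_max; apply/orP; left; apply/orP; right.
apply: le_trans (le_bigmax _ _ (cl i)) => /=.
rewrite ler_wpM2r ?invr_ge0 ?(ltW s0) // ler_wpM2l ?le_bigmax_cond //.
by rewrite mulr_ge0 // subr_ge0; case/andP: (alpha_01 (cl i)).
Qed.

Lemma Lcal_ge_local i : Ltil / (1 - p0) * (1 - p (cl i))^-1 <= Lc.
Proof.
have [_ p0_lt1] := andP p0_01.
rewrite /Lcal le_max; apply/orP; right.
rewrite ler_wpM2l ?divr_ge0 ?subr_ge0 ?(ltW p0_lt1) //.
exact: (le_bigmax _ (fun j => (1 - p j)^-1) (cl i)).
Qed.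

End Constant.

Section Weights.
Variables (R : realType) (n k : nat) (cl : 'I_n -> 'I_k).
Variables (gam : 'I_n -> R) (alpha : 'I_k -> R).
Hypothesis gam_gt0 : forall i, 0 < gam i.
Hypothesis cl_surj : forall j, exists i, cl i = j.

Lemma clusterW_gt0 j : 0 < clusterW cl gam j.
Proof.
have [i <-] := cl_surj j; rewrite /clusterW (bigD1 i) //=.
by rewrite ltr_pwDl // sumr_ge0 // => i' _; rewrite ltW.
Qed.

Lemma alpha_weight_gt0 : (forall j, 0 <= alpha j) -> (exists j, alpha j != 0) ->
  0 < \sum_(i < n) alpha (cl i) * gam i.
Proof.
move=> alpha_ge0 [j alpha_j]; have [i cl_i] := cl_surj j.
have ai_gt0 : 0 < alpha (cl i) * gam i by rewrite mulr_gt0 // cl_i lt_def alpha_j alpha_ge0.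
rewrite (bigD1 i) //=; apply: (lt_le_trans ai_gt0); rewrite lerDl.
by apply: sumr_ge0 => i' _; rewrite mulr_ge0 // ltW.
Qed.

End Weights.

Section ClientNoise.
Variables (R : realType) (n d k : nat) (cl : 'I_n -> 'I_k).
Variables (gam : 'I_n -> R) (alpha : 'I_k -> R) (nn : 'I_n -> nat).
Variables (gtil : forall i : 'I_n, 'I_(nn i) -> 'rV[R]_d -> 'rV[R]_d).
Variables (gf : 'I_n -> 'rV[R]_d -> 'rV[R]_d) (p0 : R) (p tau : 'I_k -> R).
Variables (Th X : 'M[R]_(n, d)).
Hypothesis nn_gt0 : forall i, (0 < nn i)%N.

Local Notation cb := (cbar cl gam).
Local Notation gb := (gbar cl gam alpha).

Definition global_drift i : 'rV[R]_d := (row i Th - gb Th) - (row i X - gb X).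
Definition cluster_drift i : 'rV[R]_d :=
  (row i Th - cb Th (cl i)) - (row i X - cb X (cl i)).
Definition local_drift i (l : 'I_(nn i)) : 'rV[R]_d :=
  gtil l (row i Th) - gtil l (row i X).

Definition global_coef i := gam i * alpha (cl i) / p0.
Definition cluster_coef i :=
  gam i * (1 - tau (cl i)) * (1 - alpha (cl i)) / ((1 - p0) * p (cl i)).
Definition local_coef i := ((1 - p0) * (1 - p (cl i)))^-1.

Definition client_noise i (b0 be : bool) (l : 'I_(nn i)) : 'rV[R]_d :=
  (if b0 then global_coef i *: global_drift i else 0)
  + (if ~~ b0 && be then cluster_coef i *: cluster_drift i else 0)
  + (if ~~ b0 && ~~ be then local_coef i *: local_drift l else 0).

Lemma row_gvec_sub_gradF b0 b l i :
  row i (gvec cl gam alpha nn gtil gf p0 p tau Th X b0 b l - gradF cl gam alpha gf X)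
  = client_noise b0 (b (cl i)) (l i).
Proof.
apply/rowP => c; rewrite /client_noise /global_drift /cluster_drift /local_drift.
by rewrite /global_coef /cluster_coef /local_coef !mxE /=; ring.
Qed.

Lemma expect_gvec_sub_gradF :
  expect nn p0 p
    (fun b0 b l => norm2m (gvec cl gam alpha nn gtil gf p0 p tau Th X b0 b l
                           - gradF cl gam alpha gf X))
  = \sum_(i < n) (p0 * (global_coef i ^+ 2 * norm2v (global_drift i))
      + (1 - p0) * (p (cl i) * (cluster_coef i ^+ 2 * norm2v (cluster_drift i))
           + (1 - p (cl i)) *
             (local_coef i ^+ 2 * mean (fun l : 'I_(nn i) => norm2v (local_drift l))))).
Proof.
transitivity (expect nn p0 p
    (fun b0 b l => \sum_i norm2v (client_noise b0 (b (cl i)) (l i)))).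
  congr (expect _ _ _ _); do 3!apply: funext => ?.
  by rewrite /norm2m dotmE; apply: eq_bigr => i _; rewrite row_gvec_sub_gradF.
rewrite (@expect_sum_clients R n k cl nn p0 p
  (fun i b0 be x => norm2v (client_noise b0 be x))) //.
apply: eq_bigr => i _.
rewrite /client_noise /= !addr0 !add0r !mean_cst //.
rewrite -mulrDl (addrC (p (cl i))) subrK mul1r !norm2vZ /mean.
by under eq_bigr do rewrite add0r norm2vZ; rewrite -mulr_sumr [(nn i)%:R^-1 * _]mulrCA.
Qed.

End ClientNoise.

Unset Implicit Arguments. Set Strict Implicit.

Theorem mainTheorem10 (R : realType) (n d k : nat) (cl : 'I_n -> 'I_k)
  (nn : 'I_n -> nat)
  (ftil : forall i : 'I_n, 'I_(nn i) -> 'rV[R]_d -> R)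
  (gtil : forall i : 'I_n, 'I_(nn i) -> 'rV[R]_d -> 'rV[R]_d)
  (f : 'I_n -> 'rV[R]_d -> R) (gf : 'I_n -> 'rV[R]_d -> 'rV[R]_d)
  (GF : 'M[R]_(n, d) -> 'M[R]_(n, d))
  (Ltil mu : R) (gam : 'I_n -> R) (alpha : 'I_k -> R)
  (p0 : R) (p tau : 'I_k -> R) :
  (0 < d)%N ->
  (forall j : 'I_k, exists i : 'I_n, cl i = j) ->
  (forall i, (0 < nn i)%N) ->
  (forall i l, smooth Ltil (ftil i l) (gtil i l)) ->
  0 < mu ->
  (forall i l, strongly_convex mu (ftil i l) (gtil i l)) ->
  (forall i x, f i x = ((nn i)%:R)^-1 * \sum_(l < nn i) ftil i l x) ->
  (forall i, is_gradient_v (f i) (gf i)) ->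
  (forall i, 0 < gam i) ->
  (forall j, 0 <= alpha j <= 1) ->
  (exists j, alpha j != 0) ->
  is_gradient_m (Fobj cl gam alpha f) GF ->
  0 < p0 < 1 ->
  (forall j, 0 < p j < 1) ->
  (forall j, tau j = p0 / (p0 + 2 * (1 - p0) * p j)) ->
  forall Th X : 'M[R]_(n, d),
    expect nn p0 p
      (fun b0 b l => norm2m (gvec cl gam alpha nn gtil gf p0 p tau Th X b0 b l - GF X))
    <= 2 * Lcal cl gam alpha p0 p Ltil
         * (Fobj cl gam alpha f Th - Fobj cl gam alpha f X
            - dotm (GF X) (Th - X)).
Proof.
move=> d_gt0 cl_surj nn_gt0 ftil_smooth mu_gt0 ftil_sc fE f_grad gam_gt0 alpha_01
  alpha_neq0 F_grad p0_01 p_01 tauE Th X.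
have alpha_ge0 j : 0 <= alpha j by case/andP: (alpha_01 j).
have W_neq0 j := lt0r_neq0 (clusterW_gt0 gam_gt0 cl_surj j).
have A_neq0 := lt0r_neq0 (alpha_weight_gt0 gam_gt0 cl_surj alpha_ge0 alpha_neq0).
have [j0 _] := alpha_neq0; have [i0 _] := cl_surj j0.
have Ltil_ge0 := lipschitz_ge0 d_gt0 (ftil_smooth i0 (Ordinal (nn_gt0 i0))).2.
have ftil_convex i l := strongly_convex_convex (ltW mu_gt0) (ftil_sc i l).
rewrite (gradF_eq W_neq0 A_neq0 X F_grad f_grad) expect_gvec_sub_gradF //.
rewrite bregman_Fobj // mulr_sumr; apply: ler_sum => i _.
apply: client_term_le; rewrite ?norm2v_ge0 //.
- exact: bregman_mean_ge0 (ftil_smooth i) (ftil_convex i) (fE i) (f_grad i) _ _.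
- exact: mean_cocoercive (ftil_smooth i) (ftil_convex i) (fE i) (f_grad i) _ _ Ltil_ge0.
- exact: Lcal_ge_global.
- exact: Lcal_ge_cluster.
- exact: Lcal_ge_local.
Qed.
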